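(* Let $k\ge2$ be an integer and let $H_k$ be the graph with half-edges obtained from $K_{k,k}$ by deleting one vertex but keeping its $k$ incident edges as half-edges. Let $e\ne e'$ be two half-edges of $H_k$ with end vertices $x$ and $x'$ respectively. Then for every positive integer $n$, $H_k$ admits an $(n(k+1)+1,n)$-total colouring $\gamma$ such that $\gamma(e)=0$, $\gamma(e')=1$, $\gamma(x)=n+1$ and $\gamma(x')=nk+1$.
   Context: A half-edge has exactly one end vertex. For integers $p\ge q\ge1$, a $(p,q)$-total colouring of a graph (possibly with half-edges) is a map $c$ from the set of vertices, edges and half-edges to $\{0,1,\ldots,p-1\}$ such that $q\le|c(a)-c(b)|\le p-q$ whenever $a,b$ are two adjacent vertices, two edges/half-edges sharing an end vertex, or a vertex and an edge or half-edge incident with it. *)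

From mathcomp Require Import all_boot.
Set Implicit Arguments. Unset Strict Implicit. Unset Printing Implicit Defensive.

(* A (finite, multi)graph with half-edges: vertices, edges (each with two
   end vertices) and half-edges (each with exactly one end vertex). *)
Record hgraph := HGraph {
  hV : finType;
  hE : finType;
  hF : finType;
  eends : hE -> hV * hV;
  hend : hF -> hV }.

Definition einc (G : hgraph) (e : hE G) (v : hV G) : bool :=
  ((eends e).1 == v) || ((eends e).2 == v).

Definition distn (a b : nat) : nat := (a - b) + (b - a).

Definition pq_ok (p q a b : nat) : Prop := q <= distn a b <= p - q.

Definition pq_total_colouring (G : hgraph) (p q : nat)
  (cv : hV G -> nat) (ce : hE G -> nat) (ch : hF G -> nat) : Prop :=
  (forall v, cv v < p) /\ (forall e, ce e < p) /\ (forall h, ch h < p) /\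
  (forall e, pq_ok p q (cv (eends e).1) (cv (eends e).2)) /\
  (forall e v, einc e v -> pq_ok p q (cv v) (ce e)) /\
  (forall h, pq_ok p q (cv (hend h)) (ch h)) /\
  (forall e e' v, e != e' -> einc e v -> einc e' v -> pq_ok p q (ce e) (ce e')) /\
  (forall e h, einc e (hend h) -> pq_ok p q (ce e) (ch h)) /\
  (forall h h', h != h' -> hend h = hend h' -> pq_ok p q (ch h) (ch h')).

(* Vertices: inl a (a < k-1, remaining first side),
   inr b (b < k, second side).
   Half-edges: b < k, with end vertex inr b. *)
Definition Hk (k : nat) : hgraph :=
  @HGraph ('I_k.-1 + 'I_k)%type ('I_k.-1 * 'I_k)%type 'I_k
    (fun ab => (inl ab.1, inr ab.2)) (fun b => inr b).

From mathcomp Require Import all_boot all_fingroup zify.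

Set Implicit Arguments.
Unset Strict Implicit.
Unset Printing Implicit Defensive.

(* Every colour used has the form [n * L + u] with a level [L <= k] and an
   offset [u <= 1]; colours on different levels are at distance at least [n]
   and at most [n * k + 1] as long as the offsets do not decrease with the
   level.  Level 0 is taken by the vertices of the first side (colour 1) and by
   the half-edges (colours 0 and 1).  The edges and the second side use the
   levels [1..k] through a cyclic Latin square: edge [(a, b)] gets level
   [1 + (a + s b) mod k] for a permutation [s], and vertex [b] gets the level
   of the missing row [a = k - 1].  Choosing [s] with [s e = 1] and [s e' = 0]
   puts the ends of [e] and [e'] on levels [1] and [k]. *)

Lemma distnC a b : distn a b = distn b a.
Proof. by rewrite /distn addnC. Qed.

Lemma pq_okC p q a b : pq_ok p q a b -> pq_ok p q b a.
Proof. by rewrite /pq_ok distnC. Qed.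

Section Levels.

Variables n k : nat.
Hypothesis n_gt0 : 0 < n.

Lemma level_colour_lt L u : L <= k -> u <= 1 -> n * L + u < n * (k + 1) + 1.
Proof.
move=> Lk u1; have : n * L <= n * k by rewrite leq_mul2l Lk orbT.
rewrite mulnDr muln1; lia.
Qed.

Lemma pq_ok_levels c d u v : c < d <= k -> u <= v <= 1 ->
  pq_ok (n * (k + 1) + 1) n (n * c + u) (n * d + v).
Proof.
move=> /andP[cd dk] /andP[uv v1].
have split_d : n * d = n * c + n * (d - c) by rewrite -mulnDr subnKC // ltnW.
have ge_n : n <= n * (d - c) by rewrite leq_pmulr // subn_gt0.
have le_nk : n * (d - c) <= n * k by rewrite leq_mul2l (leq_trans (leq_subr c d) dk) orbT.
by rewrite /pq_ok /distn split_d mulnDr muln1; lia.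
Qed.

Lemma pq_ok_levels_neq c d : c <= k -> d <= k -> c != d ->
  pq_ok (n * (k + 1) + 1) n (n * c + 1) (n * d + 1).
Proof.
move=> ck dk; case: ltngtP => // [cd | dc] _.
- by apply: pq_ok_levels; rewrite ?cd ?dk.
- by apply: pq_okC; apply: pq_ok_levels; rewrite ?dc ?ck.
Qed.

Lemma pq_ok_level0 L u : 0 < L <= k -> u <= 1 ->
  pq_ok (n * (k + 1) + 1) n u (n * L + 1).
Proof.
by move=> Lk u1; have := @pq_ok_levels 0 L u 1; rewrite muln0 add0n; apply; rewrite ?u1.
Qed.

Lemma small_colour_lt u : u <= 1 -> u < n * (k + 1) + 1.
Proof. by move=> u1; have := @level_colour_lt 0 u; rewrite muln0 add0n; apply. Qed.

End Levels.

Lemma exists_perm2 (T : finType) (x x' y y' : T) : x != x' -> y != y' ->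
  exists s : {perm T}, s x = y /\ s x' = y'.
Proof.
move=> xx' yy'; pose t := tperm x' y'; pose u := tperm (t x) y.
exists (t * u)%g; rewrite !permM; split; first by rewrite tpermL.
have tx : t x != t x' by rewrite (inj_eq perm_inj).
by rewrite /t tpermL tpermD //; move: tx; rewrite /t tpermL.
Qed.

Section HkColouring.

Variables (n k : nat) (s : {perm 'I_k}) (h0 : 'I_k).
Hypothesis n_gt0 : 0 < n.
Hypothesis k_gt0 : 0 < k.

Definition latin_level (a : nat) (b : 'I_k) : nat := 1 + (a + s b) %% k.

Lemma latin_level_le a b : latin_level a b <= k.
Proof. by rewrite /latin_level add1n ltn_mod. Qed.

Lemma eq_latin_level_row a a' b : a < k -> a' < k ->
  (latin_level a b == latin_level a' b) = (a == a').
Proof. by move=> ak a'k; rewrite /latin_level eqn_add2l eqn_modDr !modn_small. Qed.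

Lemma eq_latin_level_col a b b' :
  (latin_level a b == latin_level a b') = (b == b').
Proof.
rewrite /latin_level eqn_add2l eqn_modDl !modn_small //.
by rewrite -[_ == _]/(s b == s b') (inj_eq perm_inj).
Qed.

Definition Hk_cv (v : hV (Hk k)) : nat :=
  match v with inl _ => 1 | inr b => n * latin_level k.-1 b + 1 end.

Definition Hk_ce (ab : hE (Hk k)) : nat := n * latin_level ab.1 ab.2 + 1.

Definition Hk_ch (h : hF (Hk k)) : nat := if h == h0 then 0 else 1.

Lemma Hk_ch_le1 h : Hk_ch h <= 1.
Proof. by rewrite /Hk_ch; case: eqP. Qed.

Lemma Hk_total_colouring :
  pq_total_colouring (n * (k + 1) + 1) n Hk_cv Hk_ce Hk_ch.
Proof.
have level_in a b : 0 < latin_level a b <= k by rewrite latin_level_le.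
have row_lt (a : 'I_k.-1) : a < k by rewrite (leq_trans (ltn_ord a)) ?leq_pred.
have last_row_lt : k.-1 < k by rewrite prednK.
do ![split].
- case=> [a | b]; first exact: small_colour_lt.
  by apply: level_colour_lt; rewrite ?latin_level_le.
- by move=> ab; apply: level_colour_lt; rewrite ?latin_level_le.
- by move=> h; apply: small_colour_lt => //; apply: Hk_ch_le1.
- by case=> a b; apply: pq_ok_level0.
- case=> a b [a' | b']; rewrite /einc /=; first by move=> _; apply: pq_ok_level0.
  move/eqP=> [<-]; apply: pq_ok_levels_neq; rewrite ?latin_level_le //.
  by rewrite eq_latin_level_row // neq_ltn ltn_ord orbT.
- by move=> h; apply: pq_okC; apply: pq_ok_level0; rewrite ?Hk_ch_le1.
- case=> a1 b1 [a2 b2] [a | b] ne; rewrite /einc /=.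
  + move=> /orP[/eqP[/= ea1] | //] /orP[/eqP[/= ea2] | //]; subst a1 a2.
    apply: pq_ok_levels_neq; rewrite ?latin_level_le // eq_latin_level_col.
    by apply: contraNneq ne => /= ->.
  + move=> /eqP[/= eb1] /eqP[/= eb2]; subst b1 b2.
    apply: pq_ok_levels_neq; rewrite ?latin_level_le // eq_latin_level_row //.
    by apply: contraNneq ne => /= /val_inj ->.
- by move=> [a b] h _; apply: pq_okC; apply: pq_ok_level0; rewrite ?Hk_ch_le1.
- by move=> h h' hh' [eq_hh']; rewrite eq_hh' eqxx in hh'.
Qed.

Lemma Hk_cv_level1 b : s b = 1 :> nat -> Hk_cv (inr b) = n + 1.
Proof. by move=> sb; rewrite /= /latin_level sb (addn1 k.-1) prednK // modnn muln1. Qed.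

Lemma Hk_cv_levelk b : s b = 0 :> nat -> Hk_cv (inr b) = n * k + 1.
Proof.
by move=> sb; rewrite /= /latin_level sb addn0 modn_small ?add1n ?prednK // ltn_predL.
Qed.

End HkColouring.

Theorem lemma3 (k : nat) (hk : 2 <= k) (e e' : hF (Hk k)) (hee : e != e')
  (n : nat) (hn : 0 < n) :
  exists (cv : hV (Hk k) -> nat) (ce : hE (Hk k) -> nat) (ch : hF (Hk k) -> nat),
    [/\ pq_total_colouring (n * (k + 1) + 1) n cv ce ch,
        ch e = 0, ch e' = 1,
        cv (hend e) = n + 1
      & cv (hend e') = n * k + 1].
Proof.
have k_gt0 : 0 < k := ltnW hk.
have [s [se se']] := exists_perm2 hee (isT : Ordinal hk != Ordinal k_gt0).
exists (Hk_cv n s), (Hk_ce n s), (Hk_ch e); split.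
- exact: Hk_total_colouring.
- by rewrite /Hk_ch eqxx.
- by rewrite /Hk_ch eq_sym (negbTE hee).
- by apply: Hk_cv_level1; rewrite ?se.
- by apply: Hk_cv_levelk; rewrite ?se'.
Qed.
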